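(* For any integers $n\ge2$ and $a$, $G(\alpha;n,na,n)\ne\emptyset$ if and only if $a\ge2$ and $\alpha>0$.
   Context: Work on $\mathbb P^1$ over an algebraically closed field. A coherent system of type $(n,d,k)$ is a pair $(E,V)$ with $E$ a vector bundle of rank $n$ and degree $d$ and $V\subset H^0(E)$ a subspace of dimension $k$. The $\alpha$-slope is $\mu_\alpha(E,V)=\frac dn+\alpha\frac kn$; a coherent subsystem $(F,W)$ has $F\subset E$ a subbundle and $W\subset V\cap H^0(F)$; $(E,V)$ is $\alpha$-stable if $\mu_\alpha(F,W)<\mu_\alpha(E,V)$ for all proper coherent subsystems. $G(\alpha;n,d,k)$ is the moduli space of $\alpha$-stable coherent systems of type $(n,d,k)$. *)

From HB Require Import structures.
From mathcomp Require Import all_boot all_order all_algebra.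
From mathcomp Require Import mpoly.
From mathcomp Require Import reals.
Set Implicit Arguments. Unset Strict Implicit. Unset Printing Implicit Defensive.
Import Order.TTheory GRing.Theory Num.Theory.
Local Open Scope ring_scope.

(* Model of P^1 over an algebraically closed field K: homogeneous coordinates
   (X,Y); global sections of O(d) are homogeneous forms of degree d in
   K[X,Y] (only 0 when d < 0).  By Grothendieck's theorem every vector bundle
   of rank n on P^1 is O(a_1) + ... + O(a_n); we represent E by its splitting
   type a : 'I_n -> int, so deg E = \sum a_i and
   H^0(E) = { s : 'I_n -> K[X,Y] | s i homogeneous of degree a i }. *)

Definition hsec (K : fieldType) (d : int) (p : {mpoly K[2]}) : bool :=
  match d with Posz m => p \is m.-homog | Negz _ => p == 0 end.

Definition is_section (K : fieldType) (n : nat) (a : 'I_n -> int)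
  (s : 'I_n -> {mpoly K[2]}) : Prop := forall i, hsec (a i) (s i).

Definition pt (K : fieldType) (x y : K) : 'I_2 -> K :=
  fun i => if val i == 0%N then x else y.

Definition comb (K : fieldType) (n k : nat) (c : 'I_k -> K)
  (s : 'I_k -> 'I_n -> {mpoly K[2]}) : 'I_n -> {mpoly K[2]} :=
  fun i => \sum_(j < k) c j *: s j i.

Definition sec_indep (K : fieldType) (n k : nat)
  (s : 'I_k -> 'I_n -> {mpoly K[2]}) : Prop :=
  forall c : 'I_k -> K, (forall i, comb c s i = 0) -> forall j, c j = 0.

Definition vec_indep (K : fieldType) (k w : nat) (c : 'I_w -> 'I_k -> K) : Prop :=
  forall e : 'I_w -> K, (forall j, \sum_(l < w) e l * c l j = 0) -> forall l, e l = 0.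

(* A subbundle F of E = (+)O(a_i) of rank r: F = (+)O(b_j) together with a map
   M : F -> E (an n x r matrix of forms, M i j of degree a i - b j) whose fibre
   at every point of P^1 is injective (rank r), i.e. the cokernel is locally
   free.  deg F = \sum b_j. *)
Definition is_subbundle (K : fieldType) (n r : nat) (a : 'I_n -> int)
  (b : 'I_r -> int) (M : 'I_n -> 'I_r -> {mpoly K[2]}) : Prop :=
  (forall i j, hsec (a i - b j) (M i j)) /\
  (forall x y : K, (x, y) != (0, 0) ->
     \rank (\matrix_(i < n, j < r) (M i j).@[pt x y]) = r).

Definition in_subbundle (K : fieldType) (n r : nat) (b : 'I_r -> int)
  (M : 'I_n -> 'I_r -> {mpoly K[2]}) (sec : 'I_n -> {mpoly K[2]}) : Prop :=
  exists t : 'I_r -> {mpoly K[2]},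
    (forall j, hsec (b j) (t j)) /\ forall i, sec i = \sum_(j < r) M i j * t j.

Definition mu_alpha (R : realType) (alpha : R) (r : nat) (d : int) (k : nat) : R :=
  (d%:~R + alpha * k%:R) / r%:R.

(* The coherent system (E,V) with E = (+)O(a_i), V spanned by the k
   linearly independent sections s_1..s_k, is alpha-stable: for every proper
   coherent subsystem (F,W), F a nonzero subbundle and W a subspace of
   V cap H^0(F) (W spanned by the w independent elements sum_l c_l,j s_j),
   mu_alpha(F,W) < mu_alpha(E,V). *)
Definition alpha_stable (K : fieldType) (R : realType) (alpha : R) (n k : nat)
  (a : 'I_n -> int) (s : 'I_k -> 'I_n -> {mpoly K[2]}) : Prop :=
  forall (r : nat) (b : 'I_r -> int) (M : 'I_n -> 'I_r -> {mpoly K[2]})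
         (w : nat) (c : 'I_w -> 'I_k -> K),
    (0 < r)%N -> is_subbundle a b M ->
    vec_indep c -> (forall l, in_subbundle b M (comb (c l) s)) ->
    ((r < n)%N \/ (w < k)%N) ->
    mu_alpha alpha r (\sum_(j < r) b j) w < mu_alpha alpha n (\sum_(i < n) a i) k.

Definition G_nonempty (K : fieldType) (R : realType) (alpha : R)
  (n : nat) (d : int) (k : nat) : Prop :=
  exists (a : 'I_n -> int) (s : 'I_k -> 'I_n -> {mpoly K[2]}),
    \sum_(i < n) a i = d /\
    (forall j, is_section a (s j)) /\ sec_indep s /\
    alpha_stable alpha a s.

From HB Require Import structures.
From mathcomp Require Import all_boot all_order all_algebra.
From mathcomp Require Import mpoly.
From mathcomp Require Import reals.
From mathcomp Require Import ring lra zify.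
Import Order.TTheory GRing.Theory Num.Theory.
Set Implicit Arguments. Unset Strict Implicit. Unset Printing Implicit Defensive.
Local Open Scope ring_scope.

(* Write E = O(e_1) + ... + O(e_n) with sum e_i = n a, and let V have dimension n.

   The subsystem (E, 0) forces alpha > 0.  If e_i < 0, every section of V
   vanishes in the i-th summand, so (complementary summand, V) is a subsystem and
   stability gives e_i > a + alpha; hence a >= 0 and then every e_i >= 0.  If e_i = 0,
   the sections of V whose (constant) i-th component vanishes form a subspace of
   dimension >= n - 1 inside H^0 of the complementary summand, which destabilises.
   So every e_i >= 1, and a < 2 forces E = O(1)^n.  Writing the sections as X A + Y B
   with square matrices A, B, over an algebraically closed field some nonzero c
   satisfies c (x A + y B) = 0 with (x, y) <> 0, so V contains a section u l with u a
   constant vector and l a linear form; (O(1), <u l>) has the same alpha-slope 1 + alpha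
   as (E, V).

   For a = m >= 2 take E = O(m)^n with the sections
   X^m e_j + X^(m-1) Y e_j P + Y^m e_j E_00, where P is the cyclic shift.  Evaluating at
   (1:0) gives dim W <= rk F for every subsystem (F, W), and every summand of F has degree
   <= m, so mu_alpha(F, W) <= m + alpha.  Equality forces F = O(m)^r to be a constant
   subbundle with dim W = r; the coefficient space of W is then invariant under P and
   E_00, hence is all of K^n. *)
Section HomogeneousForms.
Variable K : fieldType.
Local Notation P := {mpoly K[2]}.
Local Notation x0 := (0 : 'I_2).
Local Notation x1 := (1 : 'I_2).

Lemma hsec0 d : hsec d (0 : P).
Proof. by case: d => [m|m] /=; [exact: dhomog0 |]. Qed.

Lemma hsecD d (p q : P) : hsec d p -> hsec d q -> hsec d (p + q).
Proof.
case: d => [m|m] /=; first exact: rpredD.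
by move=> /eqP -> /eqP ->; rewrite addr0.
Qed.

Lemma hsecZ d c (p : P) : hsec d p -> hsec d (c *: p).
Proof.
case: d => [m|m] /=; first exact: rpredZ.
by move=> /eqP ->; rewrite scaler0.
Qed.

Lemma hsec_sum d (I : finType) (F : I -> P) :
  (forall i, hsec d (F i)) -> hsec d (\sum_i F i).
Proof. by move=> hF; elim/big_ind: _ => //; [exact: hsec0 | exact: hsecD]. Qed.

Lemma hsec_ge0 d (p : P) : hsec d p -> p != 0 -> 0 <= d.
Proof. by case: d => [m|m] //= /eqP ->; rewrite eqxx. Qed.

Lemma hsecC c : hsec 0 (c%:MP : P).
Proof. by rewrite /= -alg_mpolyC; apply/rpredZ/dhomog1. Qed.

Lemma hsecX i : hsec 1 ('X_i : P).
Proof. by rewrite /= dhomogX; apply/eqP/mdeg1. Qed.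

Lemma dhomog0_mpolyC (p : P) : p \is 0.-homog -> p = (p@_0)%:MP.
Proof.
move=> hp; apply/mpolyP => m; rewrite mcoeffC.
have [->|nz_m] := eqVneq m 0%MM; first by rewrite mulr1.
by rewrite mulr0 (dhomog_nemf_coeff hp) // mdeg_eq0.
Qed.

Lemma dhomog1_lin (p : P) : p \is 1.-homog ->
  p = p@_U_(x0) *: 'X_x0 + p@_U_(x1) *: 'X_x1.
Proof.
have U01 : (U_(x0) == U_(x1))%MM = false.
  by apply/negP => /eqP /mnmP /(_ x0); rewrite !mnm1E.
move=> hp; apply/mpolyP => m; rewrite mcoeffD !mcoeffZ !mcoeffX.
have [/mdeg1P [i /eqP ->] | deg_m] := boolP (mdeg m == 1%N).
  have [->|->] : i = x0 \/ i = x1.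
    by case: i => [[|[|]]] // ?; [left | right]; apply/val_inj.
    by rewrite eq_sym U01 eqxx mulr0 mulr1 addr0.
  by rewrite U01 eqxx mulr0 mulr1 add0r.
have U_m i : (U_(i) == m)%MM = false by apply: contraNF deg_m => /eqP <-; rewrite mdeg1.
by rewrite (dhomog_nemf_coeff hp deg_m) !U_m !mulr0 addr0.
Qed.

End HomogeneousForms.

Section Independence.
Variable K : fieldType.

Lemma vec_indepP k w (c : 'I_w -> 'I_k -> K) :
  vec_indep c <-> row_free (\matrix_(l, j) c l j).
Proof.
have mulE (e : 'rV_w) : e *m \matrix_(l, j) c l j = \row_j \sum_l e 0 l * c l j.
  by apply/rowP => j; rewrite !mxE; apply: eq_bigr => l _; rewrite mxE.
split => [c_indep | c_free e e_c l].
  apply: inj_row_free => e; rewrite mulE => /rowP e_c; apply/rowP => l.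
  by rewrite mxE (c_indep (fun l => e 0 l)) // => j; have := e_c j; rewrite !mxE.
suff /rowP/(_ l) : \row_l e l = 0 by rewrite !mxE.
apply: (row_free_inj c_free); rewrite mul0mx mulE; apply/rowP => j.
by rewrite !mxE; under eq_bigr do rewrite mxE; exact: e_c.
Qed.

Lemma kernel_vec_indep k (lam : 'I_k -> K) :
  exists w (c : 'I_w -> 'I_k -> K),
    [/\ (k.-1 <= w)%N, vec_indep c & forall l, \sum_j c l j * lam j = 0].
Proof.
pose L := \col_j lam j.
exists (\rank (kermx L)), (fun l j => row_base (kermx L) l j); split.
- by rewrite mxrank_ker; have := rank_leq_col L; lia.
- apply/vec_indepP; rewrite (_ : \matrix_(l, j) _ = row_base (kermx L)) ?row_base_free //.
  by apply/matrixP => l j; rewrite mxE.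
have /sub_kermxP/matrixP LK0 : (row_base (kermx L) <= kermx L)%MS by rewrite eq_row_base.
move=> l; transitivity ((row_base (kermx L) *m L) l 0); last by rewrite LK0 mxE.
by rewrite mxE; apply: eq_bigr => j _; congr (_ * _); rewrite mxE.
Qed.

End Independence.

Section Pencil.
Variable K : closedFieldType.

Lemma pencil_left_kernel n (A B : 'M[K]_n.+1) :
  exists x y (c : 'rV_n.+1),
    [/\ (x, y) != (0, 0), c != 0 & x *: (c *m A) + y *: (c *m B) = 0].
Proof.
have [B_unit | B_sing] := boolP (B \in unitmx).
  have /closed_rootP [lam] : size (char_poly (A *m invmx B)) != 1%N.
    by rewrite size_char_poly.
  rewrite -eigenvalue_root_char => /eigenvalueP [v vAB nz_v].
  exists 1, (- lam), v; split => //; first by rewrite xpair_eqE oner_eq0.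
  by rewrite scale1r scaleNr scalemxAl -vAB mulmxA mulmxKV ?subrr.
have /rowV0Pn [c /sub_kermxP cB nz_c] : kermx B != 0.
  by rewrite kermx_eq0 row_free_unit.
exists 0, 1, c; split => //; first by rewrite xpair_eqE oner_eq0 andbF.
by rewrite cB scale0r scaler0 addr0.
Qed.

End Pencil.

Section CyclicShift.
Variables (K : fieldType) (n' : nat).
Local Notation n := n'.+1.
Local Notation e00 := (delta_mx 0 0 : 'M[K]_n).
Local Notation "''e_' j" := (delta_mx 0 j : 'rV[K]_n).

Definition cycle_mx : 'M[K]_n := \matrix_(j, i) (j == ordS i)%:R.

Lemma mul_cycle_mx (v : 'rV[K]_n) i : (v *m cycle_mx) 0 i = v 0 (ordS i).
Proof.
rewrite mxE (bigD1 (ordS i)) //= big1 => [|j /negbTE nj]; rewrite mxE ?nj ?mulr0 //.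
by rewrite eqxx mulr1 addr0.
Qed.

Lemma delta_mul_cycle_mx j : 'e_(ordS j) *m cycle_mx = 'e_j.
Proof. by apply/rowP => i; rewrite mul_cycle_mx !mxE (inj_eq (@ordS_inj n)). Qed.

Lemma mul_delta00 (v : 'rV[K]_n) : v *m e00 = v 0 0 *: 'e_0.
Proof.
apply/rowP => i; rewrite !mxE (bigD1 0) //= big1 => [|j /negbTE nj].
  by rewrite !mxE eqxx addr0.
by rewrite mxE nj mulr0.
Qed.

Lemma cycle_delta_invariant_full w (C : 'M[K]_(w, n)) : C != 0 ->
  (C *m cycle_mx <= C)%MS -> (C *m e00 <= C)%MS -> row_full C.
Proof.
move=> nz_C CP_C CE_C.
have P_C v : (v <= C)%MS -> (v *m cycle_mx <= C)%MS.
  by move=> vC; apply: submx_trans (submxMr _ vC) CP_C.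
(* Multiplying by [cycle_mx] moves a nonzero coordinate of a vector of C down to
   position 0, where [e00] isolates it. *)
have e0_C : ('e_0 <= C)%MS.
  suff e0_v k (i : 'I_n) (v : 'rV_n) : i = k :> nat -> (v <= C)%MS -> v 0 i != 0 ->
      ('e_0 <= C)%MS.
    by case/rowV0Pn: nz_C => v vC /rV0Pn [i vi]; exact: (e0_v _ _ _ erefl vC vi).
  elim: k i v => [|k IH] i v ik vC vi.
    have i0 : i = 0 by apply/val_inj.
    have := submx_trans (submxMr _ vC) CE_C.
    rewrite mul_delta00 -i0 => /(scalemx_sub (v 0 i)^-1).
    by rewrite scalerA mulVf // scale1r i0.
  have lt_kn : (k < n)%N by have := ltn_ord i; lia.
  apply: (IH (Ordinal lt_kn) (v *m cycle_mx)) => //; first exact: P_C.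
  rewrite mul_cycle_mx (_ : ordS _ = i) //; apply/val_inj.
  by rewrite /= modn_small ?ik // -ik.
(* [e_(j+1) *m cycle_mx = e_j] and [e_0 *m cycle_mx = e_(n-1)]: descend from [e_0]. *)
have ej_C t (j : 'I_n) : (j + t)%N = n' -> ('e_j <= C)%MS.
  elim: t j => [|t IH] j jt; rewrite -delta_mul_cycle_mx; apply: P_C.
    rewrite (_ : ordS j = 0) //; apply/val_inj.
    by rewrite addn0 in jt; rewrite /= jt modnn.
  by apply: IH; rewrite /= modn_small; lia.
rewrite -sub1mx; apply/row_subP => j; rewrite row1.
by apply: (ej_C (n' - j)%N); rewrite subnKC // -ltnS.
Qed.

End CyclicShift.

Section CoefficientMatrices.
Variable K : fieldType.
Local Notation P := {mpoly K[2]}.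
Variables (n k : nat) (s : 'I_k -> 'I_n -> P).

Definition coef_mx (mo : 'X_{1..2}) : 'M[K]_(k, n) := \matrix_(j, i) (s j i)@_mo.

Definition eval_mx (v : 'I_2 -> K) : 'M[K]_(k, n) := \matrix_(j, i) (s j i).@[v].

Lemma comb_section (e : 'I_n -> int) (c : 'I_k -> K) :
  (forall j, is_section e (s j)) -> is_section e (comb c s).
Proof. by move=> s_sec i; apply: hsec_sum => j; apply/hsecZ/s_sec. Qed.

Lemma comb_coef_row (c : 'I_k -> K) mo :
  \row_i (comb c s i)@_mo = \row_j c j *m coef_mx mo.
Proof.
apply/rowP => i; rewrite !mxE /comb raddf_sum; apply: eq_bigr => j _.
by rewrite /coef_mx !mxE; exact: mcoeffZ.
Qed.

Lemma comb_eval_row (c : 'I_k -> K) v :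
  \row_i (comb c s i).@[v] = \row_j c j *m eval_mx v.
Proof.
apply/rowP => i; rewrite !mxE /comb raddf_sum; apply: eq_bigr => j _.
by rewrite /eval_mx !mxE; exact: mevalZ.
Qed.

Lemma eval_free_sec_indep v : row_free (eval_mx v) -> sec_indep s.
Proof.
move=> s_free c c0 j.
suff /rowP/(_ j) : \row_j c j = 0 by rewrite !mxE.
apply: (row_free_inj s_free); rewrite mul0mx -comb_eval_row.
by apply/rowP => i; rewrite !mxE c0 meval0.
Qed.

Lemma subsystem_dim_le_rank r (b : 'I_r -> int) (M : 'I_n -> 'I_r -> P) w
    (c : 'I_w -> 'I_k -> K) v :
  row_free (eval_mx v) -> vec_indep c ->
  (forall l, in_subbundle b M (comb (c l) s)) -> (w <= r)%N.
Proof.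
move=> s_free /vec_indepP c_free W_F; have [t tP] := fin_all_exists W_F.
pose Mv := \matrix_(i, j) (M i j).@[v]; pose Tv := \matrix_(l, j) (t l j).@[v].
have CsE : \matrix_(l, j) c l j *m eval_mx v = Tv *m Mv^T.
  apply/matrixP => l i; rewrite !mxE.
  transitivity (comb (c l) s i).@[v].
    rewrite /comb raddf_sum; apply: eq_bigr => j _; rewrite /eval_mx !mxE.
    exact/esym/mevalZ.
  rewrite (tP l).2 raddf_sum; apply: eq_bigr => j _; rewrite !mxE mulrC.
  exact: mevalM.
rewrite -(eqP c_free) -(mxrankMfree _ s_free) CsE.
exact: leq_trans (mxrankM_maxl _ _) (rank_leq_col _).
Qed.

Lemma subbundle_summand_le r (a : 'I_n -> int) (b : 'I_r -> int)
    (M : 'I_n -> 'I_r -> P) :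
  is_subbundle a b M -> forall j, exists i, b j <= a i.
Proof.
case=> M_sec M_rank j.
have [i Mij | M0] := pickP (fun i => M i j != 0).
  by exists i; rewrite -subr_ge0; exact: hsec_ge0 (M_sec i j) Mij.
pose Mv := \matrix_(i < n, j < r) (M i j).@[pt 1 0].
have Mv_free : row_free Mv^T.
  by rewrite /row_free mxrank_tr M_rank // xpair_eqE oner_eq0.
have ej0 : delta_mx 0 j = 0 :> 'rV[K]_r.
  apply: (row_free_inj Mv_free); rewrite mul0mx -rowE; apply/rowP => i.
  by rewrite !mxE; move/negbFE/eqP: (M0 i) => ->; rewrite meval0.
by move/rowP: ej0 => /(_ j); rewrite !mxE !eqxx => /eqP; rewrite oner_eq0.
Qed.

Lemma const_subbundle_coef_sub r (b : 'I_r -> int) (M : 'I_n -> 'I_r -> P)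
    (M0 : 'M[K]_(n, r)) (c : 'I_k -> K) mo :
  (forall i j, M i j = (M0 i j)%:MP) -> in_subbundle b M (comb c s) ->
  (\row_j c j *m coef_mx mo <= M0^T)%MS.
Proof.
move=> M_const [t [_ tP]]; rewrite -comb_coef_row.
suff -> : \row_i (comb c s i)@_mo = \row_j (t j)@_mo *m M0^T by exact: submxMl.
apply/rowP => i; rewrite !mxE tP raddf_sum; apply: eq_bigr => j _.
by rewrite !mxE M_const [RHS]mulrC; exact: mcoeffCM.
Qed.

End CoefficientMatrices.

Section Slopes.
Variables (R : realType) (alpha : R).

Lemma mu_alpha_homog n (a : int) : (0 < n)%N ->
  mu_alpha alpha n (n%:Z * a) n = a%:~R + alpha.
Proof.
move=> n_gt0; have n_neq0 : (n%:R : R) != 0 by rewrite pnatr_eq0 -lt0n.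
by rewrite /mu_alpha intrM -[((n%:Z)%:~R : R)]/(n%:R); field.
Qed.

Lemma mu_alpha_lt_homog r (d a : int) w : (0 < r)%N -> 0 < alpha ->
  d <= r%:Z * a -> (w <= r)%N -> (d < r%:Z * a) || (w < r)%N ->
  mu_alpha alpha r d w < a%:~R + alpha.
Proof.
move=> r_gt0 alpha_gt0; rewrite -(ler_int R) -(ltr_int R) -(ler_nat R) -(ltr_nat R).
rewrite intrM -[((r%:Z)%:~R : R)]/(r%:R) /mu_alpha ltr_pdivrMr ?ltr0n //.
move=> d_le w_le strict.
have := ler_wpM2l (ltW alpha_gt0) w_le.
by case/orP: strict => [d_lt | w_lt]; [lra | rewrite -(ltr_pM2l alpha_gt0) in w_lt; lra].
Qed.

Lemma mu_alpha_ge_homog r (a : int) w : (0 < r)%N -> 0 <= a -> 0 <= alpha ->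
  (r <= w)%N -> a%:~R + alpha <= mu_alpha alpha r (r.+1%:Z * a) w.
Proof.
move=> r_gt0; rewrite -(ler_int R) -(ler_nat R) => a_ge0 alpha_ge0 r_le.
rewrite /mu_alpha ler_pdivlMr ?ltr0n // intrM -[((r.+1%:Z)%:~R : R)]/(r.+1%:R).
have := ler_wpM2l alpha_ge0 r_le; rewrite -addn1 natrD; lra.
Qed.

Lemma mu_alpha_drop_lt r (a e : int) : (0 < r)%N ->
  mu_alpha alpha r (r.+1%:Z * a - e) r.+1 < a%:~R + alpha -> a%:~R + alpha < e%:~R.
Proof.
move=> r_gt0; rewrite /mu_alpha ltr_pdivrMr ?ltr0n // intrB intrM.
by rewrite -[((r.+1%:Z)%:~R : R)]/(r.+1%:R) -addn1 natrD; lra.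
Qed.

End Slopes.

Section Subbundles.
Variable K : fieldType.
Local Notation P := {mpoly K[2]}.

Lemma is_subbundle_id n (e : 'I_n -> int) :
  is_subbundle e e (fun i j => (i == j)%:R : P).
Proof.
split=> [i j | x y _].
  by have [->|_] := eqVneq i j; [rewrite subrr; exact: dhomog1 | exact: hsec0].
rewrite (_ : \matrix_(i, j) _ = 1%:M) ?mxrank1 //.
by apply/matrixP => i j; rewrite !mxE; case: (i == j); rewrite ?meval1 ?meval0.
Qed.

Lemma is_subbundle_line n (e : 'I_n -> int) d (u : 'I_n -> K) :
  (forall i, e i = d) -> (exists i, u i != 0) ->
  is_subbundle e (fun _ : 'I_1 => d) (fun i _ => (u i)%:MP).
Proof.
move=> e_d [i ui]; split=> [i' j | x y _]; first by rewrite e_d subrr; exact: hsecC.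
apply/eqP; rewrite eqn_leq rank_leq_col lt0n mxrank_eq0.
by apply: contra_neq ui => /matrixP /(_ i 0); rewrite !mxE mevalC.
Qed.

Variable n' : nat.
Local Notation n := n'.+1.

Definition omit_mx (i0 : 'I_n) : 'I_n -> 'I_n' -> P := fun i j => (i == lift i0 j)%:R.

Lemma is_subbundle_omit (e : 'I_n -> int) i0 :
  is_subbundle e (fun j => e (lift i0 j)) (omit_mx i0).
Proof.
split=> [i j | x y _].
  rewrite /omit_mx; have [->|_] := eqVneq i (lift i0 j); last exact: hsec0.
  by rewrite subrr; exact: dhomog1.
rewrite -mxrank_tr; apply/eqP/inj_row_free => v /rowP vM0; apply/rowP => j.
have := vM0 (lift i0 j); rewrite !mxE (bigD1 j) //= big1 => [|j' j'j].
  by rewrite !mxE /omit_mx eqxx meval1 mulr1 addr0.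
by rewrite !mxE /omit_mx (inj_eq (@lift_inj _ i0)) eq_sym (negbTE j'j) meval0 mulr0.
Qed.

Lemma in_subbundle_omit (e : 'I_n -> int) i0 (sec : 'I_n -> P) :
  is_section e sec -> sec i0 = 0 ->
  in_subbundle (fun j => e (lift i0 j)) (omit_mx i0) sec.
Proof.
move=> sec_e sec_i0; exists (fun j => sec (lift i0 j)); split => // i.
rewrite /omit_mx; case: (unliftP i0 i) => [j ->|->].
  rewrite (bigD1 j) //= eqxx mul1r big1 ?addr0 // => j' j'j.
  by rewrite (inj_eq (@lift_inj _ i0)) eq_sym (negbTE j'j) mul0r.
by rewrite sec_i0 big1 // => j _; rewrite (negbTE (neq_lift i0 j)) mul0r.
Qed.

End Subbundles.

Lemma stable_alpha_gt0 (K : fieldType) (R : realType) (alpha : R) n k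
    (e : 'I_n -> int) (s : 'I_k -> 'I_n -> {mpoly K[2]}) :
  (0 < n)%N -> (0 < k)%N -> alpha_stable alpha e s -> 0 < alpha.
Proof.
move=> n_gt0 k_gt0 stable.
have c_indep : vec_indep (fun (_ : 'I_0) (_ : 'I_k) => 0 : K) by move=> ? ? [].
have W_F (l : 'I_0) : in_subbundle e (fun i j => (i == j)%:R) (comb (fun _ => 0) s).
  by case: l.
have := stable n e _ 0%N _ n_gt0 (is_subbundle_id K e) c_indep W_F (or_intror k_gt0).
rewrite /mu_alpha mulr0 addr0 ltr_pM2r ?invr_gt0 ?ltr0n // ltrDl.
by rewrite pmulr_lgt0 // ltr0n.
Qed.

Section NecessaryConditions.
Variables (K : fieldType) (R : realType) (alpha : R) (n' : nat) (a : int).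
Local Notation n := n'.+2.
Variables (e : 'I_n -> int) (s : 'I_n -> 'I_n -> {mpoly K[2]}).
Hypotheses (sum_e : \sum_(i < n) e i = n%:Z * a)
  (s_sec : forall j, is_section e (s j)) (stable : alpha_stable alpha e s).

Let alpha_gt0 : 0 < alpha.
Proof. exact: stable_alpha_gt0 _ _ stable. Qed.

Let sum_omit (i0 : 'I_n) : \sum_(j < n'.+1) e (lift i0 j) = n%:Z * a - e i0.
Proof. by rewrite -sum_e (bigD1_ord i0) //= addrC addrK. Qed.

Lemma neg_summand_gt i0 : e i0 < 0 -> a%:~R + alpha < (e i0)%:~R.
Proof.
move=> ei0_lt0.
have s_i0 j : s j i0 = 0 by move: (s_sec j i0); case: (e i0) ei0_lt0 => // ? _ /eqP.
pose c (l j : 'I_n) : K := (l == j)%:R.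
have c_indep : vec_indep c.
  apply/vec_indepP; rewrite (_ : \matrix_(l, j) _ = 1%:M) ?row_free_unit ?unitmx1 //.
  by apply/matrixP => l j; rewrite !mxE.
have W_F l : in_subbundle (fun j => e (lift i0 j)) (omit_mx K i0) (comb (c l) s).
  apply: in_subbundle_omit; first exact: comb_section.
  by rewrite /comb big1 // => j _; rewrite s_i0 scaler0.
have := stable (ltn0Sn _) (is_subbundle_omit K e i0) c_indep W_F
  (or_introl (ltnSn _)).
by rewrite sum_omit sum_e mu_alpha_homog //; exact: mu_alpha_drop_lt.
Qed.

Lemma slope_ge0 : 0 <= a.
Proof.
rewrite leNgt; apply/negP => a_lt0.
have a_lt i : a < e i.
  have [ei_lt0 | ei_ge0] := ltP (e i) 0; last exact: lt_le_trans a_lt0 ei_ge0.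
  by rewrite -(ltr_int R); have := neg_summand_gt ei_lt0; have := alpha_gt0; lra.
have : \sum_(i < n) a < \sum_(i < n) e i.
  rewrite (bigD1 ord0) //= [ltRHS](bigD1 ord0) //= ltr_leD //.
  by apply: ler_sum => i _; exact: ltW.
by rewrite sum_e sumr_const card_ord -mulr_natl natz ltxx.
Qed.

Lemma summand_ge0 i : 0 <= e i.
Proof.
rewrite leNgt; apply/negP => ei_lt0; have := neg_summand_gt ei_lt0.
have := slope_ge0; rewrite -(ler_int R); rewrite -(ltr_int R) in ei_lt0.
by have := alpha_gt0; lra.
Qed.

Lemma summand_neq0 i0 : e i0 != 0.
Proof.
apply/eqP => ei0.
have s_i0 j : s j i0 = ((s j i0)@_0)%:MP.
  by apply: dhomog0_mpolyC; have := s_sec j i0; rewrite ei0.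
have [w [c [w_ge c_indep c_lam]]] := kernel_vec_indep (fun j => (s j i0)@_0).
have W_F l : in_subbundle (fun j => e (lift i0 j)) (omit_mx K i0) (comb (c l) s).
  apply: in_subbundle_omit; first exact: comb_section.
  transitivity ((\sum_j c l j * (s j i0)@_0)%:MP : {mpoly K[2]}).
    rewrite /comb raddf_sum; apply: eq_bigr => j _; rewrite {1}s_i0.
    by apply/mpolyP => mo; rewrite mcoeffZ !mcoeffC mulrA.
  by rewrite c_lam mpolyC0.
have := stable (ltn0Sn _) (is_subbundle_omit K e i0) c_indep W_F
  (or_introl (ltnSn _)).
rewrite sum_omit sum_e ei0 subr0 mu_alpha_homog // ltNge mu_alpha_ge_homog //.
- exact: slope_ge0.
- exact: ltW.
Qed.

Lemma summand_ge1 i : 1 <= e i.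
Proof. by rewrite -gtz0_ge1 lt_neqAle eq_sym summand_neq0 summand_ge0. Qed.

End NecessaryConditions.

Lemma summands_eq1 n (e : 'I_n -> int) (a : int) : (0 < n)%N ->
  (forall i, 1 <= e i) -> \sum_(i < n) e i = n%:Z * a -> a < 2 ->
  forall i, e i = 1.
Proof.
move=> n_gt0 e_ge1 sum_e a_lt2.
have sum_e1 : \sum_(i < n) (e i - 1) = n%:Z * (a - 1).
  by rewrite sumrB sum_e sumr_const card_ord natz mulrBr mulr1.
have e1_ge0 i : 0 <= e i - 1 by rewrite subr_ge0.
have a_eq1 : a = 1.
  have : 0 <= n%:Z * (a - 1) by rewrite -sum_e1; exact: sumr_ge0.
  by rewrite pmulr_rge0 ?ltz_nat // subr_ge0; lia.
have sum0 : \sum_(i < n) (e i - 1) = 0 by rewrite sum_e1 a_eq1 subrr mulr0.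
move=> i; apply/eqP; rewrite -subr_eq0; apply/eqP.
exact: (psumr_eq0P (fun i _ => e1_ge0 i) sum0).
Qed.

Section LinearForms.
Variable K : fieldType.
Local Notation P := {mpoly K[2]}.
Local Notation x0 := (0 : 'I_2).
Local Notation x1 := (1 : 'I_2).

Lemma dependent_lin_forms n (p q : 'rV[K]_n) x y : (x, y) != (0, 0) ->
  x *: p + y *: q = 0 ->
  exists (u : 'I_n -> K) (l : P),
    hsec 1 l /\ forall i, p 0 i *: 'X_x0 + q 0 i *: 'X_x1 = (u i)%:MP * l.
Proof.
move=> nz_xy /rowP pq0.
have {}pq0 i : x * p 0 i + y * q 0 i = 0 by have := pq0 i; rewrite !mxE.
have [y0 | nz_y] := eqVneq y 0.
  have nz_x : x != 0 by move: nz_xy; rewrite y0 xpair_eqE eqxx andbT.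
  exists (fun i => q 0 i), 'X_x1; split => [|i]; first exact: hsecX.
  have /eqP : x * p 0 i = 0 by rewrite -(pq0 i) y0 mul0r addr0.
  by rewrite mulf_eq0 (negbTE nz_x) => /eqP ->; rewrite scale0r add0r mul_mpolyC.
exists (fun i => p 0 i), ('X_x0 + (- (x / y)) *: 'X_x1); split => [|i].
  by apply: hsecD; [|apply: hsecZ]; exact: hsecX.
have -> : q 0 i = - (x / y) * p 0 i.
  apply: (mulfI nz_y); rewrite (_ : y * q 0 i = - (x * p 0 i)); first by field.
  by apply/eqP; rewrite -subr_eq0 opprK addrC pq0.
by rewrite mul_mpolyC scalerDr !scalerA mulrC.
Qed.

End LinearForms.

Lemma lin_sections_comb_factor (K : closedFieldType) n
    (s : 'I_n.+1 -> 'I_n.+1 -> {mpoly K[2]}) :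
  (forall j i, hsec 1 (s j i)) ->
  exists (c : 'rV[K]_n.+1) (u : 'I_n.+1 -> K) (l : {mpoly K[2]}),
    [/\ c != 0, hsec 1 l & forall i, comb (c 0) s i = (u i)%:MP * l].
Proof.
move=> s_lin.
have [x [y [c [nz_xy nz_c xy0]]]] :=
  pencil_left_kernel (coef_mx s U_(0 : 'I_2)) (coef_mx s U_(1 : 'I_2)).
have [u [l [l_lin ul]]] := dependent_lin_forms nz_xy xy0.
exists c, u, l; split => // i.
have cA mo : c *m coef_mx s mo = \row_i (comb (c 0) s i)@_mo.
  by rewrite comb_coef_row; congr (_ *m _); apply/rowP => j; rewrite mxE.
rewrite -ul !cA !mxE.
exact: dhomog1_lin (comb_section (c 0) (e := fun _ => 1) s_lin i).
Qed.

Lemma O1_not_stable (K : closedFieldType) (R : realType) (alpha : R) n'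
    (e : 'I_n'.+2 -> int) (s : 'I_n'.+2 -> 'I_n'.+2 -> {mpoly K[2]}) :
  (forall i, e i = 1) -> (forall j, is_section e (s j)) -> sec_indep s ->
  ~ alpha_stable alpha e s.
Proof.
move=> e1 s_sec s_indep stable.
have s_lin j i : hsec 1 (s j i) by rewrite -(e1 i); exact: s_sec.
have [c [u [l [nz_c l_lin cu]]]] := lin_sections_comb_factor s_lin.
have nz_u : exists i, u i != 0.
  have [i ui | u0] := pickP (fun i => u i != 0); first by exists i.
  case/eqP: nz_c; apply/rowP => j; rewrite mxE; apply: (s_indep (c 0)) => i.
  by rewrite cu; move/negbFE/eqP: (u0 i) => ->; rewrite mpolyC0 mul0r.
have c_indep : vec_indep (fun _ : 'I_1 => c 0).
  apply/vec_indepP; rewrite /row_free (_ : \matrix_(l, j) _ = c) ?rank_rV ?nz_c //.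
  by apply/matrixP => l' j; rewrite mxE ord1.
have W_F (l' : 'I_1) :
    in_subbundle (fun _ : 'I_1 => 1) (fun i _ => (u i)%:MP) (comb (c 0) s).
  by exists (fun _ => l); split => [_ | i]; [exact: l_lin | rewrite big_ord1 cu].
have := stable _ _ _ _ _ (ltn0Sn 0) (is_subbundle_line e1 nz_u) c_indep W_F
  (or_introl isT).
have sum_e : \sum_i e i = n'.+2%:Z * 1.
  by rewrite (eq_bigr _ (fun i _ => e1 i)) sumr_const card_ord natz mulr1.
rewrite big_ord1 sum_e mu_alpha_homog //.
by have := mu_alpha_homog alpha (1 : int) (ltn0Sn 0); rewrite mulr1 => ->; rewrite ltxx.
Qed.

Section CyclicSystem.
Variables (K : fieldType) (m : nat).
Hypothesis m_ge2 : (2 <= m)%N.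
Local Notation P := {mpoly K[2]}.
Local Notation x0 := (0 : 'I_2).
Local Notation x1 := (1 : 'I_2).

Let m_neq0 : (m == 0%N) = false. Proof. by case: m m_ge2. Qed.
Let m_neq1 : (m == 1%N) = false. Proof. by case: m m_ge2 => [|[]]. Qed.

Definition bimon (t : nat) : 'X_{1..2} := (U_(x0) *+ (m - t) + U_(x1) *+ t)%MM.

Lemma mdeg_bimon t : (t <= m)%N -> mdeg (bimon t) = m.
Proof. by move=> t_le; rewrite /bimon mdegD !mdegMn !mdeg1 !mul1n subnK. Qed.

Lemma bimon_inj : injective bimon.
Proof.
by move=> t t' /mnmP /(_ x1); rewrite /bimon !mnmDE !mulmnE !mnm1E /= !mul1n.
Qed.

Lemma eval_bimon t : ('X_[bimon t] : P).@[pt 1 0] = (t == 0%N)%:R.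
Proof.
rewrite mevalX big_ord_recl big_ord1 /pt /= expr1n mul1r.
rewrite (_ : lift _ _ = x1); last exact/val_inj.
by rewrite /bimon mnmDE !mulmnE !mnm1E /= mul1n expr0n.
Qed.

Variable n' : nat.
Local Notation n := n'.+1.

Definition cyclic_sections (j i : 'I_n) : P :=
  (j == i)%:R *: 'X_[bimon 0] + cycle_mx K n' j i *: 'X_[bimon 1]
  + (delta_mx 0 0 : 'M_n) j i *: 'X_[bimon m].

Lemma cyclic_sections_sec j : is_section (fun _ => m%:Z) (cyclic_sections j).
Proof.
have X_homog t : (t <= m)%N -> ('X_[bimon t] : P) \is m.-homog.
  by move=> t_le; rewrite dhomogX; apply/eqP; exact: mdeg_bimon.
by move=> i; rewrite /= /cyclic_sections !rpredD ?rpredZ ?X_homog // ltnW.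
Qed.

Lemma eval_mx_cyclic : eval_mx cyclic_sections (pt 1 0) = 1%:M.
Proof.
apply/matrixP => j i; rewrite !mxE /cyclic_sections !mevalD !mevalZ !eval_bimon.
by rewrite m_neq0 !mulr0 mulr1 !addr0.
Qed.

Lemma mcoeff_cyclic j i t : (cyclic_sections j i)@_(bimon t) =
  (j == i)%:R * (0 == t)%:R + cycle_mx K n' j i * (1 == t)%:R
  + (delta_mx 0 0 : 'M_n) j i * (m == t)%:R.
Proof. by rewrite /cyclic_sections !mcoeffD !mcoeffZ !mcoeffX !(inj_eq bimon_inj). Qed.

Lemma coef_mx_cyclic0 : coef_mx cyclic_sections (bimon 0) = 1%:M.
Proof.
apply/matrixP => j i.
by rewrite !mxE mcoeff_cyclic eqxx eq_sym m_neq0 !mulr0 mulr1 !addr0.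
Qed.

Lemma coef_mx_cyclic1 : coef_mx cyclic_sections (bimon 1) = cycle_mx K n'.
Proof.
apply/matrixP => j i.
by rewrite [LHS]mxE mcoeff_cyclic eqxx eq_sym m_neq1 !mulr0 mulr1 add0r addr0.
Qed.

Lemma coef_mx_cyclicm : coef_mx cyclic_sections (bimon m) = delta_mx 0 0.
Proof.
apply/matrixP => j i.
by rewrite [LHS]mxE mcoeff_cyclic eqxx !(eq_sym _ m) m_neq0 m_neq1 !mulr0 mulr1 !add0r.
Qed.

Lemma cyclic_subsystem_full r (b : 'I_r -> int) (M : 'I_n -> 'I_r -> P) w
    (c : 'I_w -> 'I_n -> K) :
  (0 < r)%N -> is_subbundle (fun _ => m%:Z) b M -> (forall j, b j = m) ->
  vec_indep c -> (forall l, in_subbundle b M (comb (c l) cyclic_sections)) ->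
  w = r -> r = n.
Proof.
move=> r_gt0 [M_sec M_rank] b_m /vec_indepP c_free W_F w_r.
pose M0 := \matrix_(i, j) (M i j)@_0.
have M_const i j : M i j = (M0 i j)%:MP.
  by rewrite mxE; apply: dhomog0_mpolyC; have := M_sec i j; rewrite b_m subrr.
pose C := \matrix_(l, j) c l j.
have CS_M0 mo : (C *m coef_mx cyclic_sections mo <= M0^T)%MS.
  apply/row_subP => l; rewrite row_mul (_ : row l C = \row_j c l j).
    exact: const_subbundle_coef_sub M_const (W_F l).
  by apply/rowP => j; rewrite !mxE.
have rank_C : \rank C = r by rewrite -w_r; exact/eqP.
have rank_M0 : \rank M0^T = r.
  rewrite mxrank_tr -[RHS](M_rank 1 0) ?xpair_eqE ?oner_eq0 //; congr (\rank _).
  by apply/matrixP => i j; rewrite [RHS]mxE M_const mevalC.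
have M0_C : (M0^T <= C)%MS.
  have C_M0 : (C <= M0^T)%MS by have := CS_M0 (bimon 0); rewrite coef_mx_cyclic0 mulmx1.
  by rewrite -(mxrank_leqif_sup C_M0).2 rank_C rank_M0.
have nz_C : C != 0 by rewrite -mxrank_eq0 rank_C -lt0n.
have CP_C : (C *m cycle_mx K n' <= C)%MS.
  by rewrite -coef_mx_cyclic1; exact: submx_trans (CS_M0 _) M0_C.
have CE_C : (C *m delta_mx 0 0 <= C)%MS.
  by rewrite -coef_mx_cyclicm; exact: submx_trans (CS_M0 _) M0_C.
by rewrite -rank_C; apply/eqP; exact: cycle_delta_invariant_full nz_C CP_C CE_C.
Qed.

Variables (R : realType) (alpha : R).
Hypothesis alpha_gt0 : 0 < alpha.

Lemma cyclic_sections_stable : alpha_stable alpha (fun _ => m%:Z) cyclic_sections.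
Proof.
move=> r b M w c r_gt0 F_sub c_indep W_F proper.
have w_le_r : (w <= r)%N.
  apply: (subsystem_dim_le_rank (v := pt 1 0)) c_indep W_F.
  by rewrite eval_mx_cyclic row_free_unit unitmx1.
have sum_m : \sum_(j < r) m%:Z = r%:Z * m%:Z.
  by rewrite sumr_const card_ord -mulr_natl natz.
have b_le j : b j <= m%:Z by have [i] := subbundle_summand_le F_sub j.
have sum_b_le : \sum_j b j <= r%:Z * m%:Z by rewrite -sum_m; exact: ler_sum.
rewrite sumr_const card_ord -mulr_natl natz mu_alpha_homog //.
have [strict | ] := boolP ((\sum_j b j < r%:Z * m%:Z) || (w < r)%N).
  exact: mu_alpha_lt_homog.
rewrite negb_or -leNgt -leqNgt => /andP [sum_b_ge w_ge].
have w_r : w = r by apply/eqP; rewrite eqn_leq w_le_r.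
have b_m j : b j = m.
  have mb_ge0 j' : 0 <= m%:Z - b j' by rewrite subr_ge0.
  have sum0 : \sum_j (m%:Z - b j) = 0.
    by rewrite sumrB sum_m; apply/eqP; rewrite subr_eq0 eq_le sum_b_ge sum_b_le.
  apply/eqP; rewrite eq_sym -subr_eq0; apply/eqP.
  exact: (psumr_eq0P (fun j _ => mb_ge0 j) sum0).
have r_n := cyclic_subsystem_full r_gt0 F_sub b_m c_indep W_F w_r.
by exfalso; case: proper; lia.
Qed.

End CyclicSystem.

Theorem proposition9p1 (K : closedFieldType) (R : realType) (n : nat) (a : int)
  (alpha : R) :
  (2 <= n)%N ->
  (G_nonempty K alpha n (n%:Z * a) n <-> (2 <= a)%R /\ 0 < alpha).
Proof.
case: n => [|[|n']] // _; split.
  case=> e [s [sum_e [s_sec [s_indep stable]]]].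
  have alpha_gt0 : 0 < alpha by exact: stable_alpha_gt0 stable.
  split => //; rewrite leNgt; apply/negP => a_lt2.
  have e_eq1 : forall i, e i = 1.
    exact: summands_eq1 _ (summand_ge1 sum_e s_sec stable) sum_e a_lt2.
  exact: O1_not_stable e_eq1 s_sec s_indep stable.
case=> a_ge2 alpha_gt0; case: a a_ge2 => [m m_ge2 | //].
exists (fun _ => m%:Z), (cyclic_sections K m (n' := n'.+1)); split.
  by rewrite sumr_const card_ord -mulr_natl natz.
split; first exact: cyclic_sections_sec.
split; last exact: cyclic_sections_stable.
apply: (eval_free_sec_indep (v := pt 1 0)).
by rewrite eval_mx_cyclic // row_free_unit unitmx1.
Qed.
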